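(* Let $d\ge1$ and let $G$ be a graph with a nonedge $f=uv$. Then $(G,f)$ has the $d$-SIP if and only if, for each atom $A$ of $G\cup f$ that contains both $u$ and $v$, the pair $(A\setminus f,f)$ has the $d$-SIP.
   Context: A linkage $(G,\ell)$: finite simple graph $G$ and $\ell:E(G)\to\mathbb{R}_{\ge0}$ (squared lengths). A $d$-realization is $p:V(G)\to\mathbb{R}^d$ with $\|p(a)-p(b)\|^2=\ell(ab)$ for all $ab\in E(G)$; $\mathcal{C}^d(G,\ell)$ is the set of these. For a nonedge $f=uv$, $\Omega^d_f(G,\ell)=\{\|p(u)-p(v)\|^2:p\in\mathcal{C}^d(G,\ell)\}$; $(G,f)$ has the $d$-SIP if $\Omega^d_f(G,\ell)$ is convex (empty or a closed interval) for every $\ell$. $G\cup f$ adds $f$ as an edge; $A\setminus f$ deletes the edge $f$. A clique is a set of pairwise adjacent vertices (possibly empty); a clique separator of $H$ is a clique $U$ such that $H-U$ has at least two connected components. A graph is an atom if it is nonempty and has no clique separator; an atom of $H$ is an induced subgraph of $H$ that is an atom and is vertex-maximal with this property. *)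

From HB Require Import structures.
From mathcomp Require Import all_boot all_order all_algebra.
From mathcomp Require Import reals.
Set Implicit Arguments. Unset Strict Implicit. Unset Printing Implicit Defensive.
Import Order.TTheory GRing.Theory Num.Theory.
Local Open Scope ring_scope.

(* A finite simple graph is a symmetric irreflexive relation g on a finType T;
   its vertex set is T.  Subgraphs are described by a vertex set W and an
   edge relation h (only pairs inside W are edges). *)

Definition sqdist (R : realType) (d : nat) (x y : 'rV[R]_d) : R :=
  \sum_(i < d) (x 0 i - y 0 i) ^+ 2.

Definition restr (T : finType) (W : {set T}) (h : rel T) : rel T :=
  fun a b => [&& a \in W, b \in W & h a b].

Definition add_edge (T : finType) (h : rel T) (u v : T) : rel T :=
  fun a b => h a b || ((a == u) && (b == v)) || ((a == v) && (b == u)).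

Definition del_edge (T : finType) (h : rel T) (u v : T) : rel T :=
  fun a b => h a b && ~~ (((a == u) && (b == v)) || ((a == v) && (b == u))).

Definition is_clique (T : finType) (h : rel T) (U : {set T}) : Prop :=
  forall a b, a \in U -> b \in U -> a != b -> h a b.

Definition clique_separator (T : finType) (h : rel T) (S U : {set T}) : Prop :=
  U \subset S /\ is_clique h U /\
  exists x y, x \in S :\: U /\ y \in S :\: U /\
              ~~ connect (restr (S :\: U) h) x y.

Definition is_atom (T : finType) (h : rel T) (S : {set T}) : Prop :=
  S != set0 /\ ~ (exists U, clique_separator h S U).

Definition atom_of (T : finType) (h : rel T) (S : {set T}) : Prop :=
  is_atom h S /\ forall S' : {set T}, S \subset S' -> is_atom h S' -> S' = S.

Definition Omega (R : realType) (d : nat) (T : finType) (W : {set T})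
  (h : rel T) (l : T -> T -> R) (u v : T) : R -> Prop :=
  fun x => exists p : T -> 'rV[R]_d,
    (forall a b, a \in W -> b \in W -> h a b -> sqdist (p a) (p b) = l a b) /\
    sqdist (p u) (p v) = x.

Definition convex_set (R : realType) (P : R -> Prop) : Prop :=
  forall x y z, P x -> P y -> x <= z <= y -> P z.

Definition SIP (R : realType) (d : nat) (T : finType) (W : {set T})
  (h : rel T) (u v : T) : Prop :=
  forall l : T -> T -> R, (forall a b, 0 <= l a b) -> (forall a b, l a b = l b a) ->
    convex_set (Omega d W h l u v).

(* Realizations glue along cliques: two realizations of a clique are congruent
   (compose reflections), so realizations of the two sides of a clique
   separator of [G + uv] can be combined.  By induction on clique separators,
   for lengths realizable on [G] a squared distance between [u] and [v] is
   attained on [G] once it is attained on every atom of [G + uv] containing [u]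
   and [v]; this gives "if".  Conversely let [A] be such a maximal atom.  Each
   component of [G - A] is attached to [A] along a clique, since otherwise it
   would enlarge the atom.  Collapsing every component to a single point placed
   on its attaching clique (or, if that clique is {u, v}, at the mean of the two
   [uv]-lengths from [u]) extends two realizations of [A - uv] to realizations
   of [G] with common lengths, so the d-SIP of [G] interpolates between them. *)

From HB Require Import structures.
From mathcomp Require Import all_boot all_order all_algebra.
From mathcomp Require Import reals.
From mathcomp Require Import boolp ring lra.
Set Implicit Arguments. Unset Strict Implicit. Unset Printing Implicit Defensive.
Import Order.TTheory GRing.Theory Num.Theory.
Local Open Scope ring_scope.

Section Euclidean.
Variables (R : realType) (d : nat).
Notation V := 'rV[R]_d.
Implicit Types (x y z a b : V).

Definition dot x y : R := \sum_(i < d) x 0 i * y 0 i.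

Lemma dotC x y : dot x y = dot y x.
Proof. by apply: eq_bigr => i _; rewrite mulrC. Qed.

Lemma dotDl x y z : dot (x + y) z = dot x z + dot y z.
Proof. by rewrite /dot -big_split; apply: eq_bigr => i _; rewrite !mxE mulrDl. Qed.

Lemma dotNl x z : dot (- x) z = - dot x z.
Proof. by rewrite /dot -sumrN; apply: eq_bigr => i _; rewrite !mxE mulNr. Qed.

Lemma dotZl (k : R) x z : dot (k *: x) z = k * dot x z.
Proof. by rewrite /dot mulr_sumr; apply: eq_bigr => i _; rewrite !mxE mulrA. Qed.

Lemma dotBl x y z : dot (x - y) z = dot x z - dot y z.
Proof. by rewrite dotDl dotNl. Qed.

Lemma dotDr x y z : dot z (x + y) = dot z x + dot z y.
Proof. by rewrite dotC dotDl !(dotC z). Qed.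

Lemma dotNr x z : dot z (- x) = - dot z x.
Proof. by rewrite dotC dotNl dotC. Qed.

Lemma dotZr (k : R) x z : dot z (k *: x) = k * dot z x.
Proof. by rewrite dotC dotZl dotC. Qed.

Lemma dotBr x y z : dot z (x - y) = dot z x - dot z y.
Proof. by rewrite dotDr dotNr. Qed.

Lemma dotxx_eq0 x : (dot x x == 0) = (x == 0).
Proof.
apply/eqP/eqP => [x0|->]; last by rewrite /dot big1 // => i _; rewrite mxE mul0r.
apply/rowP => i; rewrite mxE; apply/eqP; rewrite -[_ == 0]orbb -mulf_eq0; apply/eqP.
by move/psumr_eq0P : x0 => -> // j _; rewrite -expr2 sqr_ge0.
Qed.

Lemma sqdistE x y : sqdist x y = dot (x - y) (x - y).
Proof. by apply: eq_bigr => i _; rewrite !mxE expr2. Qed.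

Lemma sqdistC x y : sqdist x y = sqdist y x.
Proof. by rewrite !sqdistE -opprB dotNl dotNr opprK. Qed.

Lemma sqdist_ge0 x y : 0 <= sqdist x y.
Proof. by apply: sumr_ge0 => i _; apply: sqr_ge0. Qed.

Lemma sqdistxx x : sqdist x x = 0.
Proof. by rewrite sqdistE subrr; apply/eqP; rewrite dotxx_eq0. Qed.

Lemma sqdist_eq0 x y : (sqdist x y == 0) = (x == y).
Proof. by rewrite sqdistE dotxx_eq0 subr_eq0. Qed.

(* Reflection in the perpendicular bisector hyperplane of [a] and [b]. *)
Definition mirror a b x : V :=
  if a == b then x
  else x - (2 * dot (x - 2^-1 *: (a + b)) (a - b) / dot (a - b) (a - b)) *: (a - b).

Lemma sqdist_mirror a b x y : sqdist (mirror a b x) (mirror a b y) = sqdist x y.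
Proof.
rewrite /mirror; case: eqP => // /eqP ab.
have nn0 : dot (a - b) (a - b) != 0 by rewrite dotxx_eq0 subr_eq0.
move: (a - b) (2^-1 *: (a + b)) nn0 => n c nn0; rewrite !sqdistE.
set sx := _ / _; set sy := _ / _.
have -> : x - sx *: n - (y - sy *: n) = (x - y) - (sx - sy) *: n.
  by apply/rowP => i; rewrite !mxE; ring.
have -> : sx - sy = 2 * dot (x - y) n / dot n n by rewrite /sx /sy !dotBl; field.
move: (x - y) => w; rewrite !(dotBl, dotBr, dotZl, dotZr) (dotC n w); field.
exact: nn0.
Qed.

Lemma mirror_l a b : mirror a b a = b.
Proof.
rewrite /mirror; case: eqP => // /eqP ab.
have nn0 : dot (a - b) (a - b) != 0 by rewrite dotxx_eq0 subr_eq0.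
have -> : a - 2^-1 *: (a + b) = 2^-1 *: (a - b).
  by apply/rowP => i; rewrite !mxE; field.
have -> : 2 * dot (2^-1 *: (a - b)) (a - b) / dot (a - b) (a - b) = 1.
  by rewrite dotZl; field.
by rewrite scale1r opprB addrC subrK.
Qed.

Lemma mirror_id a b x : sqdist x a = sqdist x b -> mirror a b x = x.
Proof.
rewrite /mirror !sqdistE; case: eqP => // _ E.
suff -> : dot (x - 2^-1 *: (a + b)) (a - b) = 0 by rewrite mulr0 mul0r scale0r subr0.
move: E; rewrite !(dotBl, dotBr, dotDl, dotDr, dotNl, dotZl, dotZr) (dotC a x) (dotC b x).
rewrite (dotC b a); lra.
Qed.

Definition isometry (f : V -> V) := forall x y, sqdist (f x) (f y) = sqdist x y.

(* Composing with mirrors fixes the mismatched points one at a time. *)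
Lemma congruent_isometry (T : finType) (K : {set T}) (p q : T -> V) :
  {in K &, forall a b : T, sqdist (p a) (p b) = sqdist (q a) (q b)} ->
  exists2 f, isometry f & {in K, forall a : T, f (p a) = q a}.
Proof.
move=> pq; pose bad f := [set a in K | f (p a) != q a].
suff: forall n f, isometry f -> (#|bad f| <= n)%N ->
    exists2 f, isometry f & {in K, forall a : T, f (p a) = q a}.
  by apply; [exact: (fun x y => erefl) | exact: max_card].
elim=> [|n IH] f If.
  rewrite leqn0 cards_eq0 => /eqP bad0; exists f => // a aK.
  by apply/eqP; apply: contraFT (in_set0 a) => ne; rewrite -bad0 inE aK ne.
case: (set_0Vmem (bad f)) => [bad0 _|[a]].
  by apply: IH; rewrite // bad0 cards0.
rewrite inE => /andP [aK ne] badn.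
apply: (IH (mirror (f (p a)) (q a) \o f)).
  by move=> x y; rewrite /= sqdist_mirror If.
have bad_sub : bad (mirror (f (p a)) (q a) \o f) \subset bad f :\ a.
  apply/subsetP => b; rewrite !inE /= => /andP [bK nb]; rewrite bK /=.
  apply/andP; split; first by apply: contraNneq nb => ->; rewrite mirror_l.
  apply: contra nb => /eqP fb; apply/eqP; rewrite fb mirror_id //.
  by rewrite -{1}fb If pq // sqdistC [RHS]sqdistC.
by apply: leq_trans (subset_leq_card bad_sub) _; rewrite (cardsD1 a) inE aK ne in badn.
Qed.

Section Segment.
Hypothesis d_gt0 : (0 < d)%N.

Definition unit_vec : V := delta_mx 0 (Ordinal d_gt0).

Lemma dot_unit_vec : dot unit_vec unit_vec = 1.
Proof.
rewrite /dot (bigD1 (Ordinal d_gt0)) //= big1 => [|i ne]; rewrite !mxE ?eqxx.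
  by rewrite mulr1 addr0.
by rewrite (negbTE ne) mulr0.
Qed.

Definition point_towards a b (r : R) : V :=
  let t := Num.sqrt (sqdist a b) in
  if t == 0 then a + r *: unit_vec else a + (r / t) *: (b - a).

Lemma sqdist_point_towards_l a b r : sqdist (point_towards a b r) a = r ^+ 2.
Proof.
rewrite /point_towards; case: eqP => [_|/eqP t0]; rewrite sqdistE addrC addKr dotZl dotZr.
  by rewrite dot_unit_vec mulr1 expr2.
rewrite -sqdistE (sqdistC b a); move: t0 (sqr_sqrtr (sqdist_ge0 a b)).
by set t := Num.sqrt _ => t0 <-; field.
Qed.

Lemma sqdist_point_towards_r a b r :
  sqdist (point_towards a b r) b = (r - Num.sqrt (sqdist a b)) ^+ 2.
Proof.
rewrite /point_towards; case: eqP => [t0|/eqP t0].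
  move/eqP: (t0); rewrite sqrtr_eq0 le_eqVlt ltNge sqdist_ge0 orbF sqdist_eq0 => /eqP <-.
  by rewrite sqdistxx sqrtr0 subr0 sqdistE addrC addKr dotZl dotZr dot_unit_vec mulr1 expr2.
rewrite sqdistE; have -> : a + (r / Num.sqrt (sqdist a b)) *: (b - a) - b =
          (1 - r / Num.sqrt (sqdist a b)) *: (a - b).
  by apply/rowP => i; rewrite !mxE; ring.
rewrite dotZl dotZr -sqdistE; move: t0 (sqr_sqrtr (sqdist_ge0 a b)).
by set t := Num.sqrt _ => t0 <-; field.
Qed.

End Segment.
End Euclidean.

Section Components.
Variables (T : finType) (H : rel T).
Hypothesis Hsym : symmetric H.
Implicit Types (A S X B M Z : {set T}) (a b c w x y : T).

Lemma connect_restrC S : connect_sym (restr S H).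
Proof. by apply: sym_connect_sym => a b; rewrite /restr Hsym andbCA. Qed.

Lemma connect_restr_subset S S' x y : S \subset S' ->
  connect (restr S H) x y -> connect (restr S' H) x y.
Proof.
move=> /subsetP SS'; apply: connect_sub => a b /and3P [aS bS hab].
by apply: connect1; rewrite /restr (SS' a) // (SS' b).
Qed.

Lemma connect_restr_mem S x y : connect (restr S H) x y -> x \in S -> y \in S.
Proof.
case/connectP=> p; elim: p x => [|z p IH] x /=; first by move=> _ ->.
by case/andP=> /and3P [_ zS _] /IH zy /zy /(_ zS).
Qed.

Lemma connect_exit S X x y : connect (restr S H) x y -> x \in X -> y \notin X ->
  exists w w', [/\ w \in X, w' \notin X, w \in S, w' \in S & H w w'].
Proof.
case/connectP=> p; elim: p x => [|z p IH] x /=; first by move=> _ -> ->.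
case/andP=> /and3P [xS zS hxz] pz yl xX yX.
by case zX: (z \in X); [exact: IH pz yl zX yX | exists x, z; rewrite zX].
Qed.

Definition connected S := {in S &, forall x y, connect (restr S H) x y}.

Definition component S x := [set y | connect (restr S H) x y].

Lemma component_id S x : x \in component S x.
Proof. by rewrite inE connect0. Qed.

Lemma component_sub S x : x \in S -> component S x \subset S.
Proof. by move=> xS; apply/subsetP => y; rewrite inE => /connect_restr_mem; apply. Qed.

Lemma component_closed S x w w' : x \in S -> w \in component S x -> w' \in S ->
  H w w' -> w' \in component S x.
Proof.
move=> xS xw w'S h; have wS := subsetP (component_sub xS) w xw.
by move: xw; rewrite !inE => xw; apply: connect_trans xw (connect1 _); rewrite /restr wS w'S.
Qed.

Lemma connect_component S x y : connect (restr S H) x y ->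
  connect (restr (component S x) H) x y.
Proof.
case/connectP=> p; elim/last_ind: p y => [|p z IH] y; first by move=> _ ->.
rewrite rcons_path last_rcons => /andP [xp /and3P [pS zS h]] ->.
have xp' : connect (restr S H) x (last x p) by apply/connectP; exists p.
apply: connect_trans (IH _ xp (erefl _)) (connect1 _).
by rewrite /restr h !inE xp' andbT; apply: connect_trans xp' (connect1 _); rewrite /restr pS zS.
Qed.

Lemma component_connected S x : connected (component S x).
Proof.
move=> y z; rewrite !inE => /connect_component xy /connect_component xz.
by apply: connect_trans xz; rewrite connect_restrC.
Qed.

Lemma component_eq S x y : connect (restr S H) x y -> component S x = component S y.
Proof.
move=> xy; apply/setP => z; rewrite !inE; apply/idP/idP; last exact: connect_trans.
by apply: connect_trans; rewrite connect_restrC.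
Qed.

Lemma atom_connected_setD B Z : is_atom H B -> is_clique H Z -> connected (B :\: Z).
Proof.
case=> _ nosep cZ x y xBZ yBZ; apply: contra_notT nosep => nxy.
exists (Z :&: B); split; first exact: subsetIr.
split; first by move=> ? ? /setIP [? _] /setIP [? _]; apply: cZ.
by exists x, y; rewrite setDIr setDv setU0.
Qed.

Definition bridge B a b M := [/\ M \subset ~: B, connected M,
  exists2 m, m \in M & H m a & exists2 m, m \in M & H m b].

Section ShrinkBridge.
Variables (B M Z : {set T}) (a b y : T).
Hypotheses (aB : a \in B) (bB : b \in B) (ab : a != b) (nab : ~~ H a b).
Hypotheses (brM : bridge B a b M) (cZ : is_clique H Z).
Hypotheses (yBMZ : y \in (B :|: M) :\: Z).
Let D := component ((B :|: M) :\: Z) y.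
Hypothesis DB : [disjoint D & B].

Let D_sub : D \subset M.
Proof.
apply/subsetP => w wD; have := subsetP (component_sub yBMZ) w wD.
by rewrite !inE (disjointFr DB wD) => /andP [_].
Qed.

Let nbr_D : forall k w, k \in B -> w \in D -> H w k -> k \in Z.
Proof.
move=> k w kB wD hwk; apply: contraT => kZ.
have kD : k \in D by apply: component_closed yBMZ wD _ hwk; rewrite !inE kZ kB.
by rewrite (disjointFr DB kD) in kB.
Qed.

Let M_nB : forall w, w \in M -> w \notin B.
Proof. by case: brM => /subsetP MB _ _ _ w /MB; rewrite inE. Qed.

Let reach_Z w : w \in M :\: D ->
  exists2 z, z \in Z & z \in M :\: D /\ connect (restr (M :\: D) H) w z.
Proof.
move=> wM'; have wM : w \in M by case/setDP: wM'.
have yD : y \in D := component_id _ y.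
have yX : y \notin component (M :\: D) w.
  by apply: contraL yD => /(subsetP (component_sub wM')) /setDP [].
case: brM => _ Mc _ _.
have [w1 [w2 [w1X w2X w1M w2M h12]]] :=
  connect_exit (Mc w y wM (subsetP D_sub y yD)) (component_id _ w) yX.
have w1M' : w1 \in M :\: D := subsetP (component_sub wM') w1 w1X.
have w2D : w2 \in D.
  apply: contraNT w2X => w2D.
  by apply: component_closed wM' w1X _ h12; rewrite inE w2D.
exists w1; last by split; rewrite // inE in w1X.
apply: contraT => w1Z; case/setDP: w1M' => _ /negP [].
by apply: component_closed yBMZ w2D _ _; rewrite 1?Hsym // !inE w1Z w1M orbT.
Qed.

Lemma bridge_shrink : bridge B a b (M :\: D).
Proof.
case: (brM) => MB _ [ma maM hma] [mb mbM hmb].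
have [w0 w0M'] : exists w0, w0 \in M :\: D.
  apply: contrapT => M'0.
  have inD m : m \in M -> m \in D.
    by move=> mM; apply: contraT => mD; case: M'0; exists m; rewrite inE mD.
  by case/negP: nab; apply: cZ (nbr_D aB (inD _ maM) hma) (nbr_D bB (inD _ mbM) hmb) ab.
have [z0 z0Z [z0M' _]] := reach_Z w0M'.
have adj k m : k \in B -> m \in M -> H m k -> exists2 m', m' \in M :\: D & H m' k.
  move=> kB mM hmk; case mD: (m \in D); last by exists m; rewrite // inE mD.
  exists z0 => //; apply: cZ (nbr_D kB mD hmk) _ => //.
  by apply: contraNneq (M_nB (subsetP (subsetDl M D) z0 z0M')) => ->.
split; [exact: subset_trans (subsetDl M D) MB | | exact: adj maM hma | exact: adj mbM hmb].
move=> x1 x2 /reach_Z [z1 z1Z [z1M c1]] /reach_Z [z2 z2Z [z2M c2]].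
apply: connect_trans c1 _; rewrite connect_restrC; apply: connect_trans c2 _.
have [->|ne] := eqVneq z2 z1; first exact: connect0.
by apply: connect1; rewrite /restr z1M z2M cZ.
Qed.

Lemma bridge_shrink_proper : M :\: D \proper M.
Proof.
have yD : y \in D := component_id _ y.
rewrite properE subsetDl /=; apply/subsetPn; exists y; first exact: subsetP D_sub y yD.
by rewrite in_setD yD.
Qed.

End ShrinkBridge.

Lemma atom_setU_minbridge B M a b : is_atom H B -> a \in B -> b \in B -> a != b ->
  ~~ H a b -> minset [pred M | `[< bridge B a b M >]] M -> is_atom H (B :|: M).
Proof.
move=> atB aB bB ab nab /minsetP [/asboolP brM minM].
split; first by apply/set0Pn; exists a; rewrite inE aB.
case=> Z [_ [cZ [x [y [xS [yS nxy]]]]]].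
set S := (B :|: M) :\: Z.
(* A component of [S] missing [B] could be cut off [M], against minimality. *)
have meetB c : c \in S -> exists2 w, w \in B & connect (restr S H) c w.
  move=> cS; apply: contrapT => noB.
  have DB : [disjoint component S c & B].
    rewrite disjoints_subset; apply/subsetP => w wD; rewrite inE.
    by apply/negP => wB; apply: noB; exists w; rewrite // inE in wD.
  have := bridge_shrink_proper cS DB.
  rewrite properEneq => /andP [/eqP + _]; apply; apply: minM (subsetDl _ _).
  by apply/asboolP; apply: bridge_shrink.
have inBZ c w : c \in S -> w \in B -> connect (restr S H) c w -> w \in B :\: Z.
  by move=> cS wB /connect_restr_mem /(_ cS) /setDP [_ wZ]; rewrite in_setD wZ wB.
have [w1 w1B yw1] := meetB y yS; have [w2 w2B xw2] := meetB x xS.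
have w21 : connect (restr (B :\: Z) H) w2 w1.
  by apply: atom_connected_setD; [| | exact: inBZ xw2 | exact: inBZ yw1].
case/negP: nxy; apply: connect_trans xw2 _; rewrite connect_restrC.
apply: connect_trans yw1 _; rewrite connect_restrC.
by apply: connect_restr_subset w21; apply: setSD; apply: subsetUl.
Qed.

Lemma atom_of_exists S : is_atom H S -> exists2 A, atom_of H A & S \subset A.
Proof.
move=> atS; have [A /maxsetP [/asboolP atA maxA] SA] :=
  maxset_exists (P := [pred A | `[< is_atom H A >]]) (asboolT atS).
by exists A => //; split => // A' AA' /asboolT /maxA; apply.
Qed.

Definition attachment A c := [set a in A | [exists w in component (~: A) c, H w a]].

Lemma mem_attachment A c a : a \in A -> H c a -> a \in attachment A c.
Proof. by move=> aA hca; rewrite inE aA; apply/exists_inP; exists c; rewrite ?component_id. Qed.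

Lemma attachment_sub A c : attachment A c \subset A.
Proof. by apply/subsetP => a /setIdP []. Qed.

Lemma attachment_eq A c c' : c \notin A -> c' \notin A -> H c c' ->
  attachment A c = attachment A c'.
Proof.
move=> cA c'A hcc'; rewrite /attachment (@component_eq _ c c') //.
by apply: connect1; rewrite /restr !inE cA c'A.
Qed.

(* Otherwise a minimal bridge through the component would enlarge the atom [A]. *)
Lemma attachment_clique A c : atom_of H A -> c \notin A -> is_clique H (attachment A c).
Proof.
move=> [atA maxA] cA a b /setIdP [aA /exists_inP [ma maC hma]].
move=> /setIdP [bA /exists_inP [mb mbC hmb]] ab; apply: contraT => nab.
have cC : c \in ~: A by rewrite inE.
have brC : bridge A a b (component (~: A) c).
  by split; [exact: component_sub | exact: component_connected | exists ma | exists mb].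
have [M minM _] := minset_exists (P := [pred M | `[< bridge A a b M >]]) (asboolT brC).
have [/asboolP [/subsetP MA _ [m mM _] _] _] := minsetP minM.
have := maxA _ (subsetUl A M) (atom_setU_minbridge atA aA bA ab nab minM).
by move/setP/(_ m); rewrite inE mM orbT => /esym mA; move: (MA m mM); rewrite inE mA.
Qed.

(* Adjacent [u] and [v] cannot lie in two different components of [S :\: U]. *)
Lemma clique_separator_component S U u v : clique_separator H S U -> H u v ->
  exists2 c, c \in S :\: U & [/\ u \notin component (S :\: U) c,
    v \notin component (S :\: U) c & ~~ (S :\: U \subset component (S :\: U) c)].
Proof.
move=> [_ [_ [x [y [xS [yS nxy]]]]]] huv; set C := component (S :\: U).
have apart z z' : z \in C x -> z' \in C y -> z = z' \/ H z z' -> False.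
  move=> zx z'y e; case/negP: nxy; have zS := subsetP (component_sub xS) z zx.
  have z'S := subsetP (component_sub yS) z' z'y.
  rewrite inE in zx; rewrite inE in z'y; apply: connect_trans zx _.
  rewrite connect_restrC; apply: connect_trans z'y _; rewrite connect_restrC.
  by case: e => [->|h]; [exact: connect0 | apply: connect1; rewrite /restr zS z'S].
case: (boolP ((u \in C x) || (v \in C x))) => [Cx|]; last first.
  rewrite negb_or => /andP [ux vx]; exists x => //; split => //.
  by apply/subsetPn; exists y; rewrite // inE.
case: (boolP ((u \in C y) || (v \in C y))) => [Cy|]; last first.
  rewrite negb_or => /andP [uy vy]; exists y => //; split => //.
  by apply/subsetPn; exists x; rewrite // inE connect_restrC.
exfalso; case/orP: Cx => zx; case/orP: Cy => z'y; apply: (apart _ _ zx z'y).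
all: by [left | right; rewrite // Hsym].
Qed.

Lemma clique_separator_decomp S U u v : clique_separator H S U ->
  u \in S -> v \in S -> H u v ->
  exists W1 W2, [/\ W1 :|: W2 = S, W1 \proper S, W2 \proper S &
    [/\ u \in W1, v \in W1, is_clique H (W1 :&: W2) &
         {in W1 :\: W2 & W2 :\: W1, forall a b, ~~ H a b}]].
Proof.
move=> sepU uS vS huv; have [c cSU [uC vC notC]] := clique_separator_component sepU huv.
case: sepU => US [cU _]; set C := component (S :\: U) c.
have /subsetP CSU : C \subset S :\: U := component_sub cSU.
have CS : C \subset S by apply/subsetP => w /CSU /setDP [].
have cC : c \in C := component_id _ c.
exists (S :\: C), (C :|: U); split.
- apply/eqP; rewrite eqEsubset !subUset subsetDl CS US /=.
  by apply/subsetP => w wS; rewrite !in_setU in_setD wS andbT; case: (w \in C).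
- rewrite properE subsetDl; apply/subsetPn; exists c; first exact: subsetP CS c cC.
  by rewrite in_setD cC.
- rewrite properE subUset CS US; apply/subsetPn.
  case/subsetPn: notC => w /setDP [wS wU] wC.
  by exists w; rewrite // in_setU negb_or wC wU.
split; [by rewrite in_setD uC uS | by rewrite in_setD vC vS | |].
  move=> a b /setIP [/setDP [_ aC] /setUP [aC'|aU]]; first by rewrite aC' in aC.
  by move=> /setIP [/setDP [_ bC] /setUP [bC'|bU]]; [rewrite bC' in bC | apply: cU].
move=> a b /setDP [/setDP [aS aC] aCU] /setDP [/setUP bCU bSC].
have bC : b \in C.
  by case: bCU => // bU; apply: contraNT bSC => bC; rewrite in_setD bC (subsetP US).
apply: contraNN aC => hab; apply: component_closed cSU bC _ _; rewrite 1?Hsym //.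
by rewrite in_setD aS andbT; apply: contra aCU => aU; rewrite in_setU aU orbT.
Qed.

End Components.

Section Realizations.
Variables (R : realType) (d : nat) (T : finType).
Implicit Types (W : {set T}) (h : rel T) (l : T -> T -> R).

Definition realizes W h l (p : T -> 'rV[R]_d) :=
  forall a b, a \in W -> b \in W -> h a b -> sqdist (p a) (p b) = l a b.

Lemma realizes_sub W W' h l p : W' \subset W -> realizes W h l p -> realizes W' h l p.
Proof. by move=> /subsetP WW' rp a b /WW' aW /WW' bW; apply: rp. Qed.

Lemma realizes_glue W1 W2 h l p1 p2 : symmetric h ->
  realizes W1 h l p1 -> realizes W2 h l p2 ->
  {in W1 :&: W2 &, forall a b, sqdist (p2 a) (p2 b) = sqdist (p1 a) (p1 b)} ->
  {in W1 :\: W2 & W2 :\: W1, forall a b, ~~ h a b} ->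
  exists2 p, realizes (W1 :|: W2) h l p & {in W1, p =1 p1}.
Proof.
move=> hsym r1 r2 agree cross; have [f If fp] := congruent_isometry agree.
pose p c := if c \in W1 then p1 c else f (p2 c).
exists p => [a b aW bW hab|c cW1]; last by rewrite /p cW1.
have pW2 c : c \in W2 -> p c = f (p2 c).
  by rewrite /p => cW2; case: ifP => // cW1; rewrite fp // inE cW1.
have inW2 x y : x \in W1 :|: W2 -> y \in W1 :|: W2 -> h x y ->
    ~~ ((x \in W1) && (y \in W1)) -> x \in W2.
  move=> xW yW hxy nW1; apply: contraTT hxy => xW2.
  have xW1 : x \in W1 by case/setUP: xW => //; rewrite (negbTE xW2).
  have yW1 : y \notin W1 by rewrite xW1 in nW1.
  by apply: cross; rewrite inE ?xW1 ?yW1 ?xW2 //; case/setUP: yW; rewrite ?(negbTE yW1).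
case: (boolP ((a \in W1) && (b \in W1))) => [/andP [aW1 bW1]|nW1].
  by rewrite /p aW1 bW1 r1.
have aW2 : a \in W2 := inW2 _ _ aW bW hab nW1.
have bW2 : b \in W2 by apply: inW2 bW aW _ _; rewrite 1?hsym // andbC.
by rewrite !pW2 // If r2.
Qed.

Lemma Omega_sub W W' h l u v z : W' \subset W ->
  Omega d W h l u v z -> Omega d W' h l u v z.
Proof. by move=> WW' [p [rp pz]]; exists p; split => //; apply: realizes_sub rp. Qed.

End Realizations.

Section AddEdge.
Variables (T : finType) (h : rel T) (u v : T).

Lemma add_edge_sym : symmetric h -> symmetric (add_edge h u v).
Proof.
move=> hsym a b; rewrite /add_edge hsym -!orbA (andbC (a == u)) (andbC (a == v)).
by rewrite [X in _ || X]orbC.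
Qed.

Lemma add_edgeW a b : h a b -> add_edge h u v a b.
Proof. by rewrite /add_edge => ->. Qed.

Lemma add_edge_uv : add_edge h u v u v.
Proof. by rewrite /add_edge !eqxx orbT. Qed.

Lemma add_edge_new a b : add_edge h u v a b -> ~~ h a b ->
  ((a == u) && (b == v)) || ((a == v) && (b == u)).
Proof. by rewrite /add_edge -orbA => /orP [->|]. Qed.

Lemma del_add_edge : symmetric h -> ~~ h u v -> del_edge (add_edge h u v) u v = h.
Proof.
move=> hsym nhuv; apply/funext => a; apply/funext => b; rewrite /del_edge /add_edge -orbA.
case: (boolP (((a == u) && (b == v)) || ((a == v) && (b == u)))) => [|new].
  by case/orP=> /andP [/eqP -> /eqP ->]; rewrite orbT andbF ?(hsym v) (negbTE nhuv).
by rewrite orbF andbT.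
Qed.

End AddEdge.

Section Gluing.
Variables (R : realType) (d : nat) (T : finType) (g : rel T) (u v : T).
Hypothesis gsym : symmetric g.
Local Notation G := (add_edge g u v).
Implicit Types (W U : {set T}) (l : T -> T -> R).

(* On a clique of [G] every pair is an edge of [g] except possibly [uv]. *)
Lemma realizes_clique_agree U l (q1 q2 : T -> 'rV[R]_d) z : is_clique G U ->
  realizes U g l q1 -> realizes U g l q2 ->
  (u \in U -> v \in U -> sqdist (q1 u) (q1 v) = z) ->
  (u \in U -> v \in U -> sqdist (q2 u) (q2 v) = z) ->
  {in U &, forall a b, sqdist (q2 a) (q2 b) = sqdist (q1 a) (q1 b)}.
Proof.
move=> cU r1 r2 q1z q2z a b aU bU.
have [<-|ab] := eqVneq a b; first by rewrite !sqdistxx.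
case gab: (g a b); first by rewrite r1 ?r2.
have /orP [] := add_edge_new (cU a b aU bU ab) (negbT gab).
  by case/andP=> /eqP ea /eqP eb; subst a b; rewrite q1z ?q2z.
by case/andP=> /eqP ea /eqP eb; subst a b; rewrite sqdistC [RHS]sqdistC q1z ?q2z.
Qed.

Lemma Omega_glue W1 W2 l (q2 : T -> 'rV[R]_d) z : u \in W1 -> v \in W1 ->
  is_clique G (W1 :&: W2) -> {in W1 :\: W2 & W2 :\: W1, forall a b, ~~ g a b} ->
  Omega d W1 g l u v z -> realizes W2 g l q2 ->
  (u \in W2 -> v \in W2 -> sqdist (q2 u) (q2 v) = z) ->
  Omega d (W1 :|: W2) g l u v z.
Proof.
move=> uW1 vW1 cI cross [q1 [r1 q1z]] r2 q2z.
have agree : {in W1 :&: W2 &, forall a b, sqdist (q2 a) (q2 b) = sqdist (q1 a) (q1 b)}.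
  apply: realizes_clique_agree cI (realizes_sub (subsetIl _ _) r1)
    (realizes_sub (subsetIr _ _) r2) (fun _ _ => q1z) _.
  by move=> /setIP [_ uW2] /setIP [_ vW2]; apply: q2z.
have [p rp pq1] := realizes_glue gsym r1 r2 agree cross.
by exists p; split; rewrite // !pq1.
Qed.

Lemma Omega_atoms W l (p : T -> 'rV[R]_d) z :
  u \in W -> v \in W -> realizes W g l p ->
  (forall A, is_atom G A -> A \subset W -> u \in A -> v \in A -> Omega d A g l u v z) ->
  Omega d W g l u v z.
Proof.
have [n] := ubnP #|W|; elim: n => // n IH in W p * => /ltnSE leWn uW vW rp atoms.
have [[U sepU]|nosep] := pselect (exists U, clique_separator G W U); last first.
  by apply: atoms => //; split => //; apply/set0Pn; exists u.
have [W1 [W2 [WE ltW1 ltW2 [uW1 vW1 cI cross]]]] :=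
  clique_separator_decomp (add_edge_sym u v gsym) sepU uW vW (add_edge_uv g u v).
have sub_case W' : W' \proper W -> u \in W' -> v \in W' -> Omega d W' g l u v z.
  move=> ltW' uW' vW'; have W'W := proper_sub ltW'.
  apply: IH (realizes_sub W'W rp) _ => //; first exact: leq_trans (proper_card ltW') leWn.
  by move=> A atA AW'; apply: atoms (subset_trans AW' W'W).
have [q2 r2 q2z] : exists2 q2 : T -> 'rV[R]_d, realizes W2 g l q2 &
    (u \in W2 -> v \in W2 -> sqdist (q2 u) (q2 v) = z).
  case: (boolP ((u \in W2) && (v \in W2))) => [/andP [uW2 vW2]|nuv].
    by have [q2 [r2 q2z]] := sub_case _ ltW2 uW2 vW2; exists q2.
  exists p => [|uW2 vW2]; first exact: realizes_sub (proper_sub ltW2) rp.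
  by rewrite uW2 vW2 in nuv.
rewrite -WE; apply: Omega_glue (sub_case _ ltW1 uW1 vW1) r2 q2z => //.
by move=> a b aW bW; apply: contraNN (cross a b aW bW); apply: add_edgeW.
Qed.

End Gluing.

Section Collapse.
Variables (R : realType) (d : nat) (T : finType) (g : rel T) (u v : T).
Hypotheses (d_gt0 : (0 < d)%N) (gsym : symmetric g).
Local Notation G := (add_edge g u v).
Variables (A : {set T}) (l : T -> T -> R) (px py : T -> 'rV[R]_d).
Hypotheses (atA : atom_of G A) (uA : u \in A) (vA : v \in A).
Hypotheses (rx : realizes A g l px) (ry : realizes A g l py).

(* The midpoint of the two lengths of [uv], so that a point at distance [r]
   from [u] towards [v] is equally far from [v] in both realizations. *)
Let r := (Num.sqrt (sqdist (px u) (px v)) + Num.sqrt (sqdist (py u) (py v))) / 2.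

(* Where a component attached to the clique [K] is collapsed in realization [p]. *)
Definition collapse_point (p : T -> 'rV[R]_d) (K : {set T}) :=
  if [pick w in K | (w != u) && (w != v)] is Some w then p w
  else if (u \in K) && (v \in K) then point_towards d_gt0 (p u) (p v) r
  else if v \in K then p v else p u.

Lemma sqdist_collapse_point (K : {set T}) a : K \subset A -> is_clique G K -> a \in K ->
  sqdist (collapse_point py K) (py a) = sqdist (collapse_point px K) (px a).
Proof.
move=> /subsetP KA cK aK; rewrite /collapse_point; case: pickP => [w /and3P [wK wu wv]|noK].
  have [<-|wa] := eqVneq w a; first by rewrite !sqdistxx.
  have gwa : g w a.
    apply: contraT => ngwa; have := add_edge_new (cK w a wK aK wa) ngwa.
    by rewrite (negbTE wu) (negbTE wv).
  by rewrite rx ?ry ?KA.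
have /orP [] : (a == u) || (a == v).
  by move: (noK a); rewrite aK /= => /negbT; rewrite negb_and !negbK.
- move=> /eqP ea; subst a; case: ifP => [_|/negbT]; first by rewrite !sqdist_point_towards_l.
  by rewrite aK /= => /negbTE ->; rewrite !sqdistxx.
- move=> /eqP ea; subst a; case: ifP => [_|_]; last by rewrite aK !sqdistxx.
  by rewrite !sqdist_point_towards_r /r; field.
Qed.

Definition collapse (p : T -> 'rV[R]_d) c :=
  if c \in A then p c else collapse_point p (attachment G A c).

Lemma sqdist_collapse a b : g a b ->
  sqdist (collapse py a) (collapse py b) = sqdist (collapse px a) (collapse px b).
Proof.
have Gsym := add_edge_sym u v gsym.
have cross c w : c \notin A -> w \in A -> g c w ->
    sqdist (collapse py c) (collapse py w) = sqdist (collapse px c) (collapse px w).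
  move=> cA wA gcw; rewrite /collapse (negbTE cA) wA.
  apply: sqdist_collapse_point (attachment_clique Gsym atA cA) _; first exact: attachment_sub.
  by apply: mem_attachment wA (add_edgeW u v gcw).
move=> gab; case aA: (a \in A); case bA: (b \in A).
- by rewrite /collapse aA bA rx ?ry.
- by rewrite sqdistC [RHS]sqdistC cross ?bA // gsym.
- by rewrite cross ?aA.
- rewrite /collapse aA bA.
  by rewrite (attachment_eq Gsym (negbT aA) (negbT bA) (add_edgeW u v gab)) !sqdistxx.
Qed.

Lemma Omega_collapse x y z : SIP R d [set: T] g u v ->
  sqdist (px u) (px v) = x -> sqdist (py u) (py v) = y -> x <= z <= y ->
  Omega d A g l u v z.
Proof.
move=> sipG ex ey xzy.
pose l' a b := sqdist (collapse px a) (collapse px b).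
have collapse_uv p : sqdist (collapse p u) (collapse p v) = sqdist (p u) (p v).
  by rewrite /collapse uA vA.
have [p [rp pz]] : Omega d [set: T] g l' u v z.
  apply: (sipG l' (fun _ _ => sqdist_ge0 _ _) (fun _ _ => sqdistC _ _) x y) xzy.
    by exists (collapse px); rewrite collapse_uv.
  by exists (collapse py); split => [a b _ _ /sqdist_collapse|]; rewrite ?collapse_uv.
exists p; split => // a b aA bA gab.
by rewrite rp ?inE // /l' /collapse aA bA rx.
Qed.

End Collapse.

Theorem mainTheorem9 (R : realType) (d : nat) (T : finType) (g : rel T) (u v : T) :
  (1 <= d)%N -> symmetric g -> irreflexive g -> u != v -> ~~ g u v ->
  (SIP R d [set: T] g u v <->
   (forall A : {set T}, atom_of (add_edge g u v) A -> u \in A -> v \in A ->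
      SIP R d A (del_edge (add_edge g u v) u v) u v)).
Proof.
move=> d_gt0 gsym _ _ nguv; rewrite del_add_edge //; split.
  move=> sipG A atA uA vA l _ _ x y z [px [rx ex]] [py [ry ey]].
  exact: Omega_collapse ex ey.
move=> sipA l l0 lC x y z ox oy xzy; have [p [rp _]] := ox.
apply: Omega_atoms (rp) _ => // A atA _ uA vA.
have [A' atA' AA'] := atom_of_exists atA.
have [uA' vA'] := (subsetP AA' u uA, subsetP AA' v vA).
apply: Omega_sub AA' (sipA A' atA' uA' vA' l l0 lC x y z _ _ xzy).
  exact: Omega_sub (subsetT A') ox.
exact: Omega_sub (subsetT A') oy.
Qed.
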